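(* Let $n\ge1$, $\alpha\in\{1,2,\dots,n\}$, and for integers $l_1>\dots>l_n\ge0$ let $$c_{\mathbf l}(\lambda)=(-1)^{n(n-1)/2}\prod_{k=1}^n\Gamma(2\lambda+2k-1)\cdot\frac{(-1)^{\sum_j l_j}\prod_{1\le a<b\le n}(l_a^2-l_b^2)}{\prod_{j=1}^n\Gamma(-l_j+\lambda+n)\,\Gamma(l_j+\lambda+n)},$$ a meromorphic function of $\lambda$. Then each $c_{\mathbf l}$ is holomorphic at $\lambda=-n+\alpha$; moreover $c_{\mathbf l}(-n+\alpha)\neq0$ if and only if $(l_{n-\alpha+1},\dots,l_{n-1},l_n)=(\alpha-1,\dots,1,0)$, and all nonzero values $c_{\mathbf l}(-n+\alpha)$ have the same sign. Consequently, at $\lambda=-n+\alpha$ the invariant Hermitian form on $C^\infty({\rm SO}(2n))$ with these Fourier coefficients is semidefinite.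
   Context: Here $c_{\mathbf l}(\lambda)$ is, for $\operatorname{Re}\lambda>-1/2$, the Fourier coefficient of $\ell_\lambda(g)=\prod_j|\sin(\varphi_j/2)|^{2\lambda}$ on ${\rm SO}(2n)$ (eigenvalues $e^{\pm i\varphi_j}$) against an irreducible character of highest weight $\mu$, with $l_j=\mu_j+n-j$ ($j<n$), $l_n=|\mu_n|$; $1/\Gamma$ is entire. *)

From HB Require Import structures.
From mathcomp Require Import all_boot all_order all_algebra.
From mathcomp Require Import all_classical all_reals all_analysis.
Set Implicit Arguments. Unset Strict Implicit. Unset Printing Implicit Defensive.
Import Order.TTheory GRing.Theory Num.Theory.
Import numFieldNormedType.Exports.
Local Open Scope ring_scope.

(* Reciprocal Gamma function 1/Gamma (entire), on real arguments, by Gauss's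
   product formula: 1/Gamma(x) = lim_{m -> oo} x(x+1)...(x+m) / (m! m^x).
   It vanishes exactly at the poles 0,-1,-2,... of Gamma. *)
Definition rgamma (R : realType) (x : R) : R :=
  limn (fun m : nat => (\prod_(i < m.+1) (x + i%:R)) / (m`!%:R * (m%:R `^ x))).

(* c_l(lambda) written with 1/Gamma:
   (-1)^{n(n-1)/2} (-1)^{sum l} prod_{a<b}(l_a^2-l_b^2)
     * prod_j [1/Gamma(-l_j+lambda+n)] [1/Gamma(l_j+lambda+n)]
     / prod_{k=1}^n [1/Gamma(2 lambda + 2k - 1)]
   indices are 0-based: l j for j : 'I_n is l_{j+1}. *)
Definition cl (R : realType) (n : nat) (l : 'I_n -> nat) (lam : R) : R :=
  (-1) ^+ ((n * (n - 1)) %/ 2) * (-1) ^+ (\sum_(j < n) l j)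
  * (\prod_(a < n) \prod_(b < n | (a < b)%N) ((l a)%:R ^+ 2 - (l b)%:R ^+ 2))
  * (\prod_(j < n) (rgamma (- (l j)%:R + lam + n%:R)
                    * rgamma ((l j)%:R + lam + n%:R)))
  / (\prod_(k < n) rgamma (2 * lam + 2 * (k.+1)%:R - 1)).

Definition strictly_decr (n : nat) (l : 'I_n -> nat) : Prop :=
  forall i j : 'I_n, (i < j)%N -> (l j < l i)%N.

From HB Require Import structures.
From mathcomp Require Import all_boot all_order all_algebra.
From mathcomp Require Import all_classical all_reals all_analysis.
From mathcomp Require Import ring lra zify.
Import Order.TTheory GRing.Theory Num.Theory.
Import numFieldNormedType.Exports.
Local Open Scope classical_set_scope.
Local Open Scope ring_scope.

Set Implicit Arguments.
Unset Strict Implicit.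
Unset Printing Implicit Defensive.

(* Put [x = -n + alpha + t].  Every argument of [1/Gamma] in [c_l] is an
   integer plus [t] (or [2 t]), and [1/Gamma(k + t) = t^[k <= 0] h(t)] with [h]
   continuous at [0] and [h(0)] of sign [(-1)^(-k)] when [k <= 0], positive
   otherwise.  So [c_l] has a limit, nonzero exactly when the zeros of the
   numerator and of the denominator have the same order.  For strictly
   decreasing [l] the numerator order [#{j | l_j >= alpha}] is at least the
   denominator order [n - alpha], with equality iff [l] ends with
   [alpha - 1, ..., 1, 0].  The sign of the limit then depends on [l] only
   through the parities of [l_j + (l_j - alpha)], i.e. of [min(alpha, l_j)],
   which that tail determines.
   The needed facts on [1/Gamma] (Gauss's limit exists, [1/Gamma(s) =
   s/Gamma(s+1)], continuity and positivity at [1]) come from monotone upper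
   and lower bounds for Gauss's product on [[0, 2]]. *)

Lemma sgr_prod (R : realDomainType) (I : finType) (F : I -> R) :
  Num.sg (\prod_i F i) = \prod_i Num.sg (F i).
Proof. by apply: big_morph; [exact: sgrM | exact: sgr1]. Qed.

Section ReciprocalGamma.
Variable R : realType.
Implicit Types (x s t : R) (m : nat).

Definition gauss_prod x m : R :=
  (\prod_(i < m.+1) (x + i%:R)) / (m`!%:R * (m%:R `^ x)).

Definition poch x m : R := (\prod_(i < m.+1) (x + i%:R)) / m`!%:R.

Lemma rgammaE x : rgamma x = limn (gauss_prod x). Proof. by []. Qed.

Lemma gauss_prodE x m : (0 < m)%N ->
  gauss_prod x m = poch x m * expR (- (x * ln m%:R)).
Proof.
move=> m0; rewrite /gauss_prod /poch /powR gt_eqF ?ltr0n //.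
by rewrite invfM mulrA expRN.
Qed.

Lemma pochS x m : poch x m.+1 = poch x m * (1 + x / m.+1%:R).
Proof.
rewrite /poch big_ord_recr /= factS natrM.
have := fact_gt0 m; rewrite -(ltr0n R) => /gt_eqF/negbT m_neq0.
by field; rewrite m_neq0 andbT -mulrS pnatr_eq0.
Qed.

Lemma poch_ge0 x m : 0 <= x -> 0 <= poch x m.
Proof. by move=> x0; rewrite divr_ge0 // prodr_ge0 // => i _; rewrite addr_ge0. Qed.

Lemma poch_gt0 x m : 0 < x -> 0 < poch x m.
Proof.
move=> x0; rewrite divr_gt0 ?ltr0n ?fact_gt0 // prodr_gt0 // => i _.
by rewrite ltr_wpDr.
Qed.

Lemma lnSn_ge m : (0 < m)%N -> (m.+1%:R)^-1 <= ln (m.+1%:R : R) - ln m%:R.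
Proof.
move=> m0; have m1_gt0 : (0 : R) < m.+1%:R by rewrite ltr0n.
have -> : (m%:R : R) = m.+1%:R * (1 - (m.+1%:R)^-1).
  by rewrite mulrBr mulr1 divff ?gt_eqF // -natr1 addrK.
have h : -1 < - (m.+1%:R : R)^-1 by rewrite ltrN2 invf_lt1 // ltr1n ltnS.
rewrite lnM ?posrE // ?subr_gt0 ?invf_lt1 ?ltr1n ?ltnS //.
by rewrite opprD addNKr lerNr; apply: le_ln1Dx.
Qed.

Lemma lnSSn_le m : (0 < m)%N -> ln (m.+2%:R : R) - ln m%:R <= 2 / m%:R.
Proof.
move=> m0; have m_gt0 : (0 : R) < m%:R by rewrite ltr0n.
have h : 0 <= 2 / (m%:R : R) by rewrite divr_ge0.
have -> : (m.+2%:R : R) = m%:R * (1 + 2 / m%:R).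
  by rewrite mulrDr mulr1 mulrCA divff ?gt_eqF // mulr1 -addn2 natrD.
rewrite lnM ?posrE ?ltr_wpDr // addrAC subrr add0r.
by apply: le_ln1Dx; lra.
Qed.

Lemma gauss_prod_step_le x m : 0 <= x -> (0 < m)%N ->
  (1 + x / m.+1%:R) * expR (- (x * ln m.+1%:R)) <= expR (- (x * ln (m%:R : R))).
Proof.
move=> x0 m0.
have -> : - (x * ln (m%:R : R)) = x * (ln m.+1%:R - ln m%:R) - x * ln m.+1%:R by ring.
rewrite expRD ler_wpM2r ?expR_ge0 //; apply: le_trans (expR_ge1Dx _).
by rewrite lerD2l ler_wpM2l // lnSn_ge.
Qed.

(* Convexity of [expR] bounds [((m+3)/(m+2))^x] by its chord on [0, 2]. *)
Lemma gauss_prod_lb_step_ge x m : 0 <= x <= 2 ->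
  expR (- (x * ln (m.+2%:R : R))) <= (1 + x / m.+1%:R) * expR (- (x * ln m.+3%:R)).
Proof.
case/andP=> x0 x2; set d := ln (m.+3%:R : R) - ln m.+2%:R.
have -> : - (x * ln (m.+2%:R : R)) = (x / 2) * (2 * d) - x * ln m.+3%:R.
  by rewrite /d; field.
rewrite expRD ler_wpM2r ?expR_ge0 //.
have x20 : 0 <= x / 2 by lra.
have x21 : x / 2 <= 1 by lra.
have := @convex_expR R (Itv01 x20 x21) (2 * d) 0.
rewrite !convRE /= mulr0 addr0 expR0 mulr1 => /le_trans; apply.
rewrite expRM_natl /d expRB !lnK ?posrE ?ltr0n //.
have k0 : (0 : R) <= m%:R by [].
rewrite -[m.+3]addn3 -[m.+2]addn2 -[m.+1]addn1 !natrD.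
set q := (m%:R + 3%:R) / (m%:R + 2%:R) : R.
have key : q ^+ 2 - 1 - 2 / (m%:R + 1%:R) = - (m%:R + 3) / ((m%:R + 2) ^+ 2 * (m%:R + 1)).
  by rewrite /q; field; lra.
have : - (m%:R + 3) / ((m%:R + 2) ^+ 2 * (m%:R + 1)) <= 0 :> R.
  by rewrite mulNr oppr_le0 divr_ge0 ?mulr_ge0 ?exprn_ge0 //; lra.
rewrite -key => /(ler_wpM2l x20); rewrite mulr0 /unstable.onem; lra.
Qed.

Lemma gauss_prod_ge0 x m : 0 <= x -> (0 < m)%N -> 0 <= gauss_prod x m.
Proof. by move=> x0 m0; rewrite gauss_prodE // mulr_ge0 ?poch_ge0 ?expR_ge0. Qed.

Lemma gauss_prod_le x m M : 0 <= x -> (0 < m <= M)%N ->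
  gauss_prod x M <= gauss_prod x m.
Proof.
move=> x0 /andP[m0 /subnK <-]; elim: (M - m)%N => [|k IH] //.
apply: le_trans IH; rewrite addSn gauss_prodE // gauss_prodE ?addn_gt0 ?m0 ?orbT //.
by rewrite pochS -mulrA ler_wpM2l ?poch_ge0 ?gauss_prod_step_le ?addn_gt0 ?m0 ?orbT.
Qed.

Lemma gauss_prod_cvg_ge0 x : 0 <= x -> cvgn (gauss_prod x).
Proof.
move=> x0; apply: (@near_nonincreasing_is_cvgn _ _ 0).
  by exists 1%N => // a /= a1 b ab; apply: gauss_prod_le => //; rewrite a1.
by exists 1%N => // m /= m1; apply: gauss_prod_ge0.
Qed.

Lemma rgamma_le_gauss_prod x m : 0 <= x -> (0 < m)%N -> rgamma x <= gauss_prod x m.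
Proof.
move=> x0 m0; apply: limr_le; first exact: gauss_prod_cvg_ge0.
by exists m => // M /= mM; apply: gauss_prod_le => //; rewrite m0.
Qed.

Definition gauss_prod_lb x m : R := poch x m * expR (- (x * ln m.+2%:R)).

Lemma gauss_prod_lb_le x m M : 0 <= x <= 2 -> (m <= M)%N ->
  gauss_prod_lb x m <= gauss_prod_lb x M.
Proof.
move=> x02 /subnK <-; elim: (M - m)%N => [|k IH] //; apply: le_trans IH _.
rewrite /gauss_prod_lb addSn pochS -mulrA ler_wpM2l ?gauss_prod_lb_step_ge //.
by apply: poch_ge0; case/andP: x02.
Qed.

Lemma gauss_prod_lb_le_gauss_prod x m : 0 <= x -> (0 < m)%N ->
  gauss_prod_lb x m <= gauss_prod x m.
Proof.
move=> x0 m0; rewrite gauss_prodE // ler_wpM2l ?poch_ge0 // ler_expR lerN2.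
by rewrite ler_wpM2l // ler_ln ?posrE ?ltr0n // ler_nat; lia.
Qed.

Lemma gauss_prod_lb_le_rgamma x m : 0 <= x <= 2 -> gauss_prod_lb x m <= rgamma x.
Proof.
move=> x02; have x0 : 0 <= x by case/andP: x02.
apply: limr_ge; first exact: gauss_prod_cvg_ge0.
exists m.+1 => // M /= mM; rewrite -/(gauss_prod x M).
apply: le_trans (gauss_prod_lb_le x02 (ltnW mM)) (gauss_prod_lb_le_gauss_prod x0 _).
exact: leq_ltn_trans (leq0n m) mM.
Qed.

Lemma rgamma1_gt0 : 0 < rgamma (1 : R).
Proof.
have h12 : 0 <= (1 : R) <= 2 by rewrite ler01 ler1n.
apply: lt_le_trans (gauss_prod_lb_le_rgamma 0 h12).
by rewrite mulr_gt0 ?poch_gt0 ?expR_gt0.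
Qed.

Lemma gauss_prod_1 x : gauss_prod x 1 = x * (x + 1).
Proof.
rewrite /gauss_prod powR1 !big_ord_recr big_ord0 (_ : 1`! = 1)%N //=.
by rewrite mul1r addr0 !mulr1 divr1.
Qed.

Lemma gauss_prod_sub_rgamma_le x m : 0 <= x <= 2 -> (0 < m)%N ->
  0 <= gauss_prod x m - rgamma x <= 24 / m%:R.
Proof.
move=> x02 m0; have /andP[x0 x2] := x02; have m_gt0 : (0 : R) < m%:R by rewrite ltr0n.
rewrite subr_ge0 rgamma_le_gauss_prod //=.
set u := x * (ln (m.+2%:R : R) - ln m%:R).
have u0 : 0 <= u.
  by rewrite mulr_ge0 // subr_ge0 ler_ln ?posrE ?ltr0n // ler_nat; lia.
have u_le : u <= 4 / m%:R.
  apply: le_trans (ler_wpM2l x0 (lnSSn_le m0)) _.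
  by rewrite mulrA ler_wpM2r ?invr_ge0 //; lra.
have lbE : gauss_prod_lb x m = gauss_prod x m * expR (- u).
  by rewrite /gauss_prod_lb gauss_prodE // -mulrA -expRD /u; congr (_ * expR _); ring.
have gauss_prod_le2 : gauss_prod x m <= 6.
  apply: le_trans (gauss_prod_le x0 (m0 : (0 < 1 <= m)%N)) _.
  by rewrite gauss_prod_1; nra.
have := gauss_prod_lb_le_rgamma m x02; rewrite lbE.
have := expR_ge1Dx (- u); have := gauss_prod_ge0 x0 m0 => g0 exp_ge lb_le.
have h1 : gauss_prod x m * (1 - expR (- u)) <= gauss_prod x m * u.
  by apply: ler_wpM2l; lra.
have h2 : gauss_prod x m * u <= 6 * (4 / m%:R) by apply: ler_pM.
have -> : 24 / m%:R = 6 * (4 / m%:R) :> R by rewrite mulrA -natrM.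
lra.
Qed.

Lemma poch_continuous m : continuous (poch^~ m).
Proof.
move=> x; rewrite /poch; apply: cvgM; last exact: cvg_cst.
apply: cvg_big => //; first exact: mul_continuous.
by move=> i _; apply: cvgD; [exact: cvg_id | exact: cvg_cst].
Qed.

Lemma gauss_prod_continuous m : (0 < m)%N -> continuous (gauss_prod^~ m).
Proof.
move=> m0 x.
have -> : gauss_prod^~ m = fun y => poch y m * expR (- (y * ln m%:R)).
  by apply/funext => y; rewrite gauss_prodE.
apply: cvgM; first exact: poch_continuous.
apply: continuous_comp; last exact: continuous_expR.
by apply: cvgN; apply: cvgM; [exact: cvg_id | exact: cvg_cst].
Qed.

(* [rgamma] is the uniform limit on [[0, 2]] of the continuous [gauss_prod^~ m]. *)
Lemma rgamma_continuous x0 : 0 < x0 < 2 -> {for x0, continuous (@rgamma R)}.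
Proof.
move=> x0_in; apply/cvgrPdist_lt => e e0.
pose m := (Num.truncn (72 / e)).+1.
have m_gt0 : (0 : R) < m%:R by rewrite ltr0n.
have err_lt : 24 / (m%:R : R) < e / 3.
  have : 72 / e < m%:R by rewrite truncnS_gt.
  by rewrite !ltr_pdivrMr //; nra.
have /cvgrPdist_lt near_gauss_prod : gauss_prod^~ m @ x0 --> gauss_prod x0 m.
  exact: gauss_prod_continuous.
have e3 : 0 < e / 3 by lra.
have x0_itv : x0 \in `]0, 2[ by rewrite in_itv.
near=> x.
have : x \in `]0, 2[ by near: x; exact: near_in_itvoo.
rewrite in_itv /= => /andP[x_gt0 x_lt2].
have : `|gauss_prod x0 m - gauss_prod x m| < e / 3 by near: x; exact: near_gauss_prod.
have /andP[x0_gt0 x0_lt2] := x0_in.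
have x0_02 : 0 <= x0 <= 2 by lra.
have x_02 : 0 <= x <= 2 by lra.
have /andP[a1 a2] := gauss_prod_sub_rgamma_le x0_02 (isT : (0 < m)%N).
have /andP[b1 b2] := gauss_prod_sub_rgamma_le x_02 (isT : (0 < m)%N).
rewrite !ltr_norml => /andP[c1 c2]; apply/andP; split; lra.
Unshelve. all: by end_near.
Qed.

Lemma poch_shift s m : s * poch (s + 1) m = poch s m * (s + m.+1%:R).
Proof.
rewrite /poch mulrA [RHS]mulrAC; congr (_ * _).
transitivity (\prod_(i < m.+2) (s + i%:R)); last by rewrite big_ord_recr.
rewrite [RHS]big_ord_recl /= addr0; congr (_ * _); apply: eq_bigr => i _.
by rewrite /bump add1n -natr1; ring.
Qed.

Lemma gauss_prod_shift s m : (0 < m)%N ->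
  s * gauss_prod (s + 1) m = gauss_prod s m * (1 + (s + 1) / m%:R).
Proof.
move=> m0; have m_neq0 : (m%:R : R) != 0 by rewrite pnatr_eq0 -lt0n.
rewrite !gauss_prodE // mulrDl mul1r opprD expRD (expRN (ln _)) lnK ?posrE ?ltr0n //.
by rewrite mulrA poch_shift -natr1; field.
Qed.

Lemma gauss_prod_cvg_rec s :
  cvgn (gauss_prod (s + 1)) -> gauss_prod s @ \oo --> s * rgamma (s + 1).
Proof.
set c := fun m : nat => 1 + (s + 1) / (m%:R : R).
have c_cvg : c @ \oo --> (1 : R).
  rewrite -[X in _ --> X]addr0 -(mulr0 (s + 1)); apply: cvgD; first exact: cvg_cst.
  by apply: cvgM; [exact: cvg_cst | rewrite -cvg_shiftS; exact: cvg_harmonic].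
move=> /cvg_ex[/= r gauss_prod_r]; rewrite rgammaE (cvg_lim _ gauss_prod_r) //.
rewrite -[X in _ --> X]mulr1 -[1]invr1.
have c_near : \forall m \near \oo, c m != 0.
  exact: cvgr_neq0 c_cvg (oner_neq0 R).
apply: cvg_trans (_ : (fun m => s * gauss_prod (s + 1) m * (c m)^-1) @ \oo --> _).
  apply: near_eq_cvg; near=> m.
  by rewrite gauss_prod_shift -/(c m) ?mulfK //; near: m; [exact: c_near | exists 1%N].
by apply: cvgM; [apply: cvgM; [exact: cvg_cst | exact: gauss_prod_r] | apply: cvgV].
Unshelve. all: by end_near.
Qed.

Lemma gauss_prod_cvg s : cvgn (gauss_prod s).
Proof.
suff gauss_prod_cvg_shift N : forall s, 0 <= s + N%:R -> cvgn (gauss_prod s).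
  apply: (gauss_prod_cvg_shift (Num.bound `|s|)); apply: ltW.
  rewrite -ltrBlDl sub0r; apply: le_lt_trans (archi_boundP (normr_ge0 s)).
  by rewrite -normrN ler_norm.
elim: N => [|N IH] {}s s_ge; first by apply: gauss_prod_cvg_ge0; rewrite addr0 in s_ge.
have /gauss_prod_cvg_rec gauss_prod_s : cvgn (gauss_prod (s + 1)).
  by apply: IH; rewrite -addrA [1 + _]addrC natr1.
by apply/cvg_ex; exists (s * rgamma (s + 1)).
Qed.

Lemma rgammaS s : rgamma s = s * rgamma (s + 1).
Proof.
rewrite rgammaE; apply: cvg_lim => //.
by apply: gauss_prod_cvg_rec; apply: gauss_prod_cvg.
Qed.

Lemma rgammaSn s N : rgamma s = (\prod_(i < N) (s + i%:R)) * rgamma (s + N%:R).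
Proof.
elim: N s => [|N IH] s; first by rewrite big_ord0 mul1r addr0.
rewrite rgammaS IH [in RHS]big_ord_recl addr0 -mulrA.
congr (_ * (_ * rgamma _)); last by rewrite -natr1; ring.
by apply: eq_bigr => i _; rewrite lift0 -natr1; ring.
Qed.

(* [rgamma (a - b + t)] with its zero [t ^+ (a <= b)] divided out; see
   [rgamma_natB]. *)
Definition rgamma_reg (a b : nat) t : R :=
  if (a <= b)%N then (\prod_(i < b - a) (t - (b - a)%:R + i%:R)) * rgamma (1 + t)
  else rgamma (1 + t) / \prod_(i < (a - b).-1) (1 + t + i%:R).

Lemma rgamma_natB a b t : -1 < t ->
  rgamma (a%:R - b%:R + t) = t ^+ (a <= b)%N * rgamma_reg a b t.
Proof.
move=> t_gt; rewrite /rgamma_reg; case: leqP => ab.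
  rewrite expr1 -opprB -natrB // addrC (rgammaSn _ (b - a).+1) big_ord_recr /=.
  have -> : t - (b - a)%:R + (b - a).+1%:R = 1 + t by rewrite -natr1; ring.
  by rewrite subrK; ring.
have [q aqb] : exists q, a = (b + q.+1)%N.
  by exists (a - b).-1; rewrite prednK ?subn_gt0 ?subnKC // ltnW.
have prod_gt0 : 0 < \prod_(i < q) (1 + t + i%:R).
  by apply: prodr_gt0 => i _; rewrite ltr_wpDr // -ltrBlDl sub0r.
rewrite aqb addKn /= expr0 mul1r (rgammaSn (1 + t) q) mulrC mulKf ?gt_eqF //.
by congr rgamma; rewrite natrD -natr1; ring.
Qed.

Lemma rgamma_reg_cvg a b : rgamma_reg a b t @[t --> 0] --> rgamma_reg a b 0.
Proof.
have rgamma1 : rgamma (1 + t) @[t --> (0 : R)] --> rgamma (1 + 0 : R).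
  have one_t : (1 + t) @[t --> (0 : R)] --> (1 + 0 : R).
    by apply: cvgD; [exact: cvg_cst | exact: cvg_id].
  apply: cvg_comp one_t _; apply: rgamma_continuous.
  by rewrite addr0 ltr01 ltr1n.
rewrite /rgamma_reg; case: leqP => ab.
  apply: cvgM rgamma1; apply: cvg_big => //; first exact: mul_continuous.
  move=> i _; apply: cvgD; last exact: cvg_cst.
  by apply: cvgB; [exact: cvg_id | exact: cvg_cst].
apply: cvgM rgamma1 _; apply: cvgV.
  by rewrite gt_eqF // prodr_gt0 // => i _; rewrite addr0 ltr_wpDr.
apply: cvg_big => //; first exact: mul_continuous.
move=> i _; apply: cvgD; last exact: cvg_cst.
by apply: cvgD; [exact: cvg_cst | exact: cvg_id].
Qed.

Lemma sgr_rgamma_reg a b : Num.sg (rgamma_reg a b 0) = (-1) ^+ (b - a).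
Proof.
rewrite /rgamma_reg addr0; case: leqP => ab.
  rewrite sgrM (gtr0_sg rgamma1_gt0) mulr1 sgr_prod -[X in _ = _ ^+ X]card_ord.
  rewrite -prodr_const; apply: eq_bigr => i _; apply: ltr0_sg.
  by rewrite add0r addrC subr_lt0 ltr_nat.
rewrite (eqnP (ltnW ab)) expr0 gtr0_sg // divr_gt0 ?rgamma1_gt0 //.
by apply: prodr_gt0 => i _; rewrite ltr_wpDr.
Qed.

End ReciprocalGamma.

Section PuncturedLimits.
Variable R : realType.

Lemma cvg_dnbhs_shift (T : topologicalType) (f : R -> T) (x0 : R) (l : T) :
  f (x0 + t) @[t --> 0^'] --> l -> f x @[x --> x0^'] --> l.
Proof.
move=> fl A /fl; rewrite !near_simpl !near_withinE => A_near.
apply: (iffRL (nbhs0P (fun y : R => y != x0 -> A (f y)) x0)).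
apply: filterS A_near => t At x0t_neq; apply: At.
by apply: contra_neq x0t_neq => ->; rewrite addr0.
Qed.

Lemma cvg_monomial_ratio (a b : nat) (u v : R -> R) : (b <= a)%N -> v 0 != 0 ->
  u t @[t --> 0] --> u 0 -> v t @[t --> 0] --> v 0 ->
  t ^+ a * u t / (t ^+ b * v t) @[t --> 0^'] --> 0 ^+ (a - b) * u 0 / v 0.
Proof.
move=> ba v0 u_cvg v_cvg.
have ratio_cvg : t ^+ (a - b) * u t / v t @[t --> 0] --> 0 ^+ (a - b) * u 0 / v 0.
  apply: cvgM; last exact: cvgV.
  by apply: cvgM => //; exact: exprn_continuous.
apply: cvg_trans (cvg_within_filter _ ratio_cvg); apply: near_eq_cvg; near=> t.
have t0 : t != 0 by near: t; exact: nbhs_dnbhs_neq.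
have vt0 : v t != 0 by near: t; apply: cvg_within; exact: cvgr_neq0 v_cvg v0.
by rewrite -[in RHS](subnK ba) exprD; field; rewrite vt0 expf_neq0.
Unshelve. all: by end_near.
Qed.

End PuncturedLimits.

Section StrictlyDecreasing.
Variables (n : nat) (l : 'I_n -> nat).
Hypothesis l_decr : strictly_decr l.

Lemma strictly_decr_gap (i j : 'I_n) : (i <= j)%N -> (l j + (j - i) <= l i)%N.
Proof.
move=> /subnK; move: (j - i)%N => d; elim: d j => [|d IH] j ij.
  by rewrite addn0 (_ : j = i) //; apply: val_inj; rewrite /= -ij.
have j_gt0 : (0 < j)%N by rewrite -ij addSn.
pose j' := Ordinal (leq_ltn_trans (leq_pred j) (ltn_ord j)).
have /IH j'_gap : (d + i)%N = j' by rewrite /= -ij addSn.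
by rewrite addnS; apply: leq_trans j'_gap; rewrite ltn_add2r l_decr //= ltn_predL.
Qed.

Lemma strictly_decr_lb (j : 'I_n) : (n - 1 - j <= l j)%N.
Proof.
have last_lt : (n.-1 < n)%N by rewrite ltn_predL (leq_ltn_trans (leq0n j)).
pose last := Ordinal last_lt.
have := @strictly_decr_gap j last; have := ltn_ord j; rewrite /=; lia.
Qed.

Lemma strictly_decr_tail alpha : (alpha <= n)%N ->
  (forall j : 'I_n, (n - alpha <= j)%N -> l j = (n - 1 - j)%N) <->
  (forall j : 'I_n, (alpha <= l j)%N = (j < n - alpha)%N).
Proof.
move=> alpha_le; split=> [tail j | head j ja].
  have := strictly_decr_lb j; have := ltn_ord j.
  case: (ltnP j (n - alpha)) => ja jn lb; first by apply/idP; lia.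
  by rewrite tail //; apply/negbTE; rewrite -ltnNge; lia.
pose i := Ordinal (leq_ltn_trans ja (ltn_ord j)).
have := head i; rewrite /= ltnn => /negbT; rewrite -ltnNge.
have := @strictly_decr_gap i j ja; have := strictly_decr_lb j; have := ltn_ord j.
by rewrite /=; lia.
Qed.

End StrictlyDecreasing.

Lemma odd_add_subn m a : odd (m + (m - a)) = odd (minn a m).
Proof.
case: (leqP a m) => am.
  have -> : (m + (m - a) = a + (m - a).*2)%N by rewrite -addnn addnA subnKC.
  by rewrite oddD odd_double addbF.
have /eqP -> : (m - a == 0)%N by rewrite subn_eq0 ltnW.
by rewrite addn0.
Qed.

Section ClLimit.
Variables (R : realType) (n alpha : nat) (l : 'I_n -> nat).
Hypotheses (alpha_gt0 : (0 < alpha)%N) (alpha_le : (alpha <= n)%N).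
Hypothesis l_decr : strictly_decr l.

Definition cl_lam0 : R := alpha%:R - n%:R.

Definition cl_coef : R := (-1) ^+ ((n * (n - 1)) %/ 2) * (-1) ^+ (\sum_(j < n) l j)
  * \prod_(a < n) \prod_(b < n | (a < b)%N) ((l a)%:R ^+ 2 - (l b)%:R ^+ 2).

(* The orders at [t = 0] of the zeros of the numerator and of the denominator
   of [cl l (cl_lam0 + t)]; see [cl_factor]. *)
Definition num_order : nat := (\sum_(j < n) ((alpha <= l j) + (alpha + l j <= 0)))%N.

Definition den_order : nat := (\sum_(k < n) (2 * alpha + 2 * k + 1 <= 2 * n))%N.

Definition num_reg (t : R) : R :=
  \prod_(j < n) (rgamma_reg alpha (l j) t * rgamma_reg (alpha + l j) 0 t).

Definition den_reg (t : R) : R :=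
  2 ^+ den_order * \prod_(k < n) rgamma_reg (2 * alpha + 2 * k + 1) (2 * n) (2 * t).

Definition cl_limit : R :=
  0 ^+ (num_order - den_order) * (cl_coef * num_reg 0) / den_reg 0.

Lemma cl_factor t : `|t| < 1 / 2 ->
  cl l (cl_lam0 + t)
  = t ^+ num_order * (cl_coef * num_reg t) / (t ^+ den_order * den_reg t).
Proof.
rewrite ltr_norml => /andP[t_gt t_lt].
have num_eq : \prod_(j < n) (rgamma (- (l j)%:R + (cl_lam0 + t) + n%:R)
    * rgamma ((l j)%:R + (cl_lam0 + t) + n%:R)) = t ^+ num_order * num_reg t.
  rewrite /num_order -prodrXr /num_reg -big_split /=; apply: eq_bigr => j _.
  rewrite exprD mulrACA -!rgamma_natB; try lra.
  by rewrite /cl_lam0 natrD; congr (rgamma _ * rgamma _); ring.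
have den_eq : \prod_(k < n) rgamma (2 * (cl_lam0 + t) + 2 * (k.+1)%:R - 1)
    = t ^+ den_order * den_reg t.
  rewrite /den_reg mulrA [t ^+ _ * _]mulrC -exprMn -prodrXr -big_split /=.
  apply: eq_bigr => k _.
  rewrite -rgamma_natB; last lra.
  by rewrite /cl_lam0 !natrD -natr1; congr rgamma; ring.
by rewrite /cl num_eq den_eq /cl_coef; ring.
Qed.

Lemma sgr_cl_coef : Num.sg cl_coef = (-1) ^+ ((n * (n - 1)) %/ 2 + \sum_(j < n) l j).
Proof.
have vandermonde_gt0 : 0 < \prod_(a < n) \prod_(b < n | (a < b)%N)
    ((l a)%:R ^+ 2 - (l b)%:R ^+ 2) :> R.
  apply: prodr_gt0 => a _; apply: prodr_gt0 => b ab.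
  by rewrite subr_gt0 -!natrX ltr_nat ltn_sqr l_decr.
by rewrite /cl_coef !sgrM (gtr0_sg vandermonde_gt0) !sgrX sgrN1 mulr1 exprD.
Qed.

Lemma sgr_num_reg0 : Num.sg (num_reg 0) = (-1) ^+ \sum_(j < n) (l j - alpha).
Proof.
rewrite sgr_prod -prodrXr; apply: eq_bigr => j _.
by rewrite sgrM !sgr_rgamma_reg sub0n expr0 mulr1.
Qed.

Lemma sgr_den_reg0 :
  Num.sg (den_reg 0) = (-1) ^+ \sum_(k < n) (2 * n - (2 * alpha + 2 * k + 1)).
Proof.
rewrite sgrM sgrX (gtr0_sg (ltr0Sn R 1)) expr1n mul1r sgr_prod -prodrXr.
by apply: eq_bigr => k _; rewrite mulr0 sgr_rgamma_reg.
Qed.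

Lemma den_reg0_neq0 : den_reg 0 != 0.
Proof. by rewrite -sgr_eq0 sgr_den_reg0 signr_eq0. Qed.

Lemma den_order_leqif :
  (den_order <= num_order
     ?= iff [forall j : 'I_n, (j < n - alpha)%N == (alpha <= l j)%N :> nat])%N.
Proof.
have -> : den_order = (\sum_(j < n) (j < n - alpha))%N.
  by apply: eq_bigr => k _; congr nat_of_bool; apply/idP/idP; lia.
have -> : num_order = (\sum_(j < n) (alpha <= l j))%N.
  apply: eq_bigr => j _.
  by rewrite [(_ + _ <= 0)%N]leqNgt addn_gt0 alpha_gt0 addn0.
apply: leqif_sum => j _; apply: leqif_eq.
have := strictly_decr_lb l_decr j; have := ltn_ord j.
case: (ltnP j (n - alpha)) => //= ja jn lb; rewrite lt0b; lia.
Qed.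

Lemma den_order_le_num : (den_order <= num_order)%N.
Proof. exact: den_order_leqif. Qed.

Lemma num_order_eq_tail : num_order = den_order <->
  (forall j : 'I_n, (n - alpha <= j)%N -> l j = (n - 1 - j)%N).
Proof.
rewrite (strictly_decr_tail l_decr alpha_le); have [_ orders_eq] := den_order_leqif.
split=> [num_den j | head].
  move: orders_eq; rewrite num_den eqxx => /esym/forallP/(_ j)/eqP.
  by case: (j < _)%N; case: (_ <= _)%N.
by apply/esym/eqP; rewrite orders_eq; apply/forallP => j; rewrite head.
Qed.

Definition cl_sign : nat := ((n * (n - 1)) %/ 2 + \sum_(j < n) minn alpha (n - 1 - j)
  + \sum_(k < n) (2 * n - (2 * alpha + 2 * k + 1)))%N.

Lemma sgr_cl_limit : num_order = den_order -> Num.sg cl_limit = (-1) ^+ cl_sign.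
Proof.
move=> num_den; have /num_order_eq_tail tail := num_den.
rewrite /cl_limit num_den subnn expr0 mul1r sgrM sgrV sgrM.
rewrite sgr_cl_coef sgr_num_reg0 sgr_den_reg0 /cl_sign !exprD.
congr (_ * _); rewrite -mulrA; congr (_ * _).
rewrite -!prodrXr -big_split; apply: eq_bigr => j _ /=.
rewrite -exprD -[LHS]signr_odd odd_add_subn signr_odd; congr (_ ^+ _).
have := strictly_decr_lb l_decr j; case: (ltnP j (n - alpha)) => ja lb.
  by lia.
by rewrite tail.
Qed.

Lemma cl_limit_neq0 : cl_limit != 0 <->
  (forall j : 'I_n, (n - alpha <= j)%N -> l j = (n - 1 - j)%N).
Proof.
rewrite -num_order_eq_tail; split=> [lim_neq0 | num_den].
  apply/eqP; apply: contraTT lim_neq0 => num_den; rewrite negbK /cl_limit expr0n.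
  suff -> : (num_order - den_order == 0)%N = false by rewrite !mul0r.
  by apply/negbTE; rewrite subn_eq0 -ltnNge ltn_neqAle den_order_le_num eq_sym num_den.
by rewrite -sgr_eq0 sgr_cl_limit // signr_eq0.
Qed.

Lemma cl_limit_sign : 0 <= (-1) ^+ cl_sign * cl_limit.
Proof.
have [num_den | num_den] := eqVneq num_order den_order.
  by rewrite -(sgr_cl_limit num_den) -normrEsg.
suff /eqP -> : cl_limit == 0 by rewrite mulr0.
by apply: contraNT num_den => /cl_limit_neq0/num_order_eq_tail ->.
Qed.

Lemma cl_cvg : cl l x @[x --> cl_lam0^'] --> cl_limit.
Proof.
apply: cvg_dnbhs_shift.
have num_cvg : cl_coef * num_reg t @[t --> 0] --> cl_coef * num_reg 0.
  apply: cvgM; first exact: cvg_cst.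
  apply: cvg_big => //; first exact: mul_continuous.
  by move=> j _; apply: cvgM; exact: rgamma_reg_cvg.
have den_cvg : den_reg t @[t --> 0] --> den_reg 0.
  apply: cvgM; first exact: cvg_cst.
  apply: cvg_big => //; first exact: mul_continuous.
  move=> k _; have two_t : 2 * t @[t --> (0 : R)] --> (2 * 0 : R).
    by apply: cvgM; [exact: cvg_cst | exact: cvg_id].
  by apply: cvg_comp two_t _; rewrite mulr0; exact: rgamma_reg_cvg.
apply: cvg_trans (cvg_monomial_ratio den_order_le_num den_reg0_neq0 num_cvg den_cvg).
apply: near_eq_cvg; near=> t; rewrite cl_factor //.
by near: t; apply: dnbhs0_lt; rewrite divr_gt0.
Unshelve. all: by end_near.
Qed.

End ClLimit.

Theorem mainTheorem10 (R : realType) (n alpha : nat)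
  (hn : (1 <= n)%N) (ha1 : (1 <= alpha)%N) (ha2 : (alpha <= n)%N) :
  (* holomorphic at lambda0 = -n+alpha: c_l has a finite limit there *)
  (forall l : 'I_n -> nat, strictly_decr l ->
     exists L : R,
       cl l x @[x --> ((alpha%:R - n%:R : R))^'] --> L) /\
  (* nonvanishing criterion for the value c_l(-n+alpha) *)
  (forall (l : 'I_n -> nat) (L : R), strictly_decr l ->
     cl l x @[x --> ((alpha%:R - n%:R : R))^'] --> L ->
     (L != 0 <-> (forall j : 'I_n, (n - alpha <= j)%N -> l j = (n - 1 - j)%N))) /\
  (* all nonzero values have the same sign *)
  (exists s : R, (s = 1 \/ s = -1) /\
     forall (l : 'I_n -> nat) (L : R), strictly_decr l ->
       cl l x @[x --> ((alpha%:R - n%:R : R))^'] --> L -> 0 <= s * L).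
Proof.
have limE (l : 'I_n -> nat) (L : R) : strictly_decr l ->
    cl l x @[x --> ((alpha%:R - n%:R : R))^'] --> L -> L = cl_limit R alpha l.
  by move=> l_decr /norm_cvg_unique; apply; exact: cl_cvg ha1 ha2 l_decr.
split; [|split].
- by move=> l l_decr; exists (cl_limit R alpha l); exact: cl_cvg ha1 ha2 l_decr.
- by move=> l L l_decr /limE -> //; exact: cl_limit_neq0 ha1 ha2 l_decr.
exists ((-1) ^+ cl_sign n alpha); split.
  by rewrite -signr_odd; case: odd; [right | left].
by move=> l L l_decr /limE -> //; exact: cl_limit_sign ha1 ha2 l_decr.
Qed.
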